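(* Let $k\in\mathbb{N}$ and let $G$ be a graph on $n$ vertices with minimum degree $\delta(G)\geq\delta\geq\frac{(k-1)n}{k}$. Suppose that $G$ has a $K_{k+1}$-component $C$ which does not contain a copy of $K_{k+2}$. Then there is a set of $k\delta-(k-1)n$ vertex-disjoint copies of $K_{k+1}$ in $G$ which all belong to $C$.
   Context: A $K_{k+1}$-walk in $G$ is a sequence $t_1,\dots,t_p$ of copies of $K_k$ such that for each $i\in[p-1]$ some copy of $K_{k+1}$ contains $t_i$ and $t_{i+1}$; $t_1,t_p$ are then $K_{k+1}$-connected; the equivalence classes of copies of $K_k$ are the $K_{k+1}$-components. For $\ell>k$, a copy of $K_\ell$ belongs to (is in) a component $C$ if it contains a copy of $K_k$ lying in $C$ (equivalently, all its copies of $K_k$ lie in $C$). $C$ contains a copy of $K_{k+2}$ if some copy of $K_{k+2}$ belongs to $C$. *)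

From mathcomp Require Import all_boot.
Set Implicit Arguments. Unset Strict Implicit. Unset Printing Implicit Defensive.

(* A simple graph: vertex set a finType T, adjacency e : rel T
   (assumed symmetric and irreflexive in the theorem). *)
Section Cliques.
Variables (T : finType) (e : rel T).

Definition is_clique (A : {set T}) : Prop :=
  forall x y, x \in A -> y \in A -> x != y -> e x y.

(* A is a copy of K_m (identified with its vertex set). *)
Definition is_copy (m : nat) (A : {set T}) : Prop :=
  is_clique A /\ #|A| = m.

Definition Kstep (k : nat) (A B : {set T}) : Prop :=
  exists Q : {set T}, is_copy k.+1 Q /\ A \subset Q /\ B \subset Q.

Fixpoint Kwalk (k : nat) (A : {set T}) (s : seq {set T}) : Prop :=
  match s with
  | [::] => True
  | B :: s' => is_copy k B /\ Kstep k A B /\ Kwalk k B s'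
  end.

Definition Kconnected (k : nat) (A B : {set T}) : Prop :=
  is_copy k A /\ is_copy k B /\
  exists s : seq {set T}, Kwalk k A s /\ last A s = B.

(* C is a K_{k+1}-component: an equivalence class of copies of K_k. *)
Definition is_Kcomponent (k : nat) (C : {set {set T}}) : Prop :=
  exists A, is_copy k A /\ forall B, B \in C <-> Kconnected k A B.

Definition belongs_to (k : nat) (C : {set {set T}}) (Q : {set T}) : Prop :=
  exists B, B \in C /\ B \subset Q.

Definition contains_copy (k : nat) (C : {set {set T}}) (l : nat) : Prop :=
  exists Q, is_copy l Q /\ belongs_to k C Q.

End Cliques.

From mathcomp Require Import all_boot.
From mathcomp Require Import zify.
Set Implicit Arguments. Unset Strict Implicit. Unset Printing Implicit Defensive.

(* Put s = k delta - (k-1) n.  Counting non-neighbours, every copy of K_k has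
   at least s common neighbours, while a copy of K_{k+1} in C has none, since
   it would extend to a K_{k+2} in C.  Fix a copy B of K_k in C and delete its
   vertices one at a time, keeping, for the current P ⊆ B, s pairwise disjoint
   sets X_i of common neighbours of P such that each P ∪ X_i is a copy of K_k
   in C and the common neighbourhood of P ∪ X_i misses every X_j; for P = B
   take X_i = ∅.  To pass from P ∪ {v} to P, adjoin to each X_i a common
   neighbour of P ∪ {v} ∪ X_i, the s new vertices being chosen distinct
   (greedily, as each of these neighbourhoods has at least s elements).  The
   invariant survives because a vertex of the new X_j in the common
   neighbourhood of the new P ∪ X_i would be a common neighbour of the K_{k+1}
   P ∪ {v} ∪ X_i.  One more extension step at P = ∅ yields s disjoint copies
   of K_{k+1} in C. *)

Section DistinctRepresentatives.
Variables (I T : finType) (N : I -> {set T}).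

Lemma distinct_representatives_in (x0 : T) (D : {set I}) (A : {set T}) :
  (forall i, i \in D -> #|D| + #|A| <= #|N i|) ->
  exists2 f : I -> T, {in D &, injective f} & forall i, i \in D -> f i \in N i :\: A.
Proof.
have [n] := ubnP #|D|; elim: n D A => // n IH D A ltDn large.
have [-> | [i iD]] := set_0Vmem D; first by exists (fun=> x0) => [? | ?]; rewrite inE.
have cardD : #|D| = #|D :\ i|.+1 by rewrite (cardsD1 i D) iD.
have [x /setDP [xN xA]] : {x | x \in N i :\: A}.
  apply/sigW/set0Pn; rewrite -card_gt0 cardsD.
  have := large i iD; have := subset_leq_card (subsetIr (N i) A); lia.
have [||g g_inj gN] := IH (D :\ i) (x |: A); first by lia.
  by move=> j /setD1P [_ jD]; have := large j jD; rewrite cardsU1 xA; lia.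
have gNx j : j \in D -> j != i -> g j \in N j :\: (x |: A).
  by move=> jD ji; apply: gN; rewrite !inE ji.
have gx j : j \in D -> j != i -> g j != x.
  by move=> jD ji; apply: contraTneq (gNx j jD ji) => ->; rewrite !inE eqxx.
exists (fun j => if j == i then x else g j) => [j1 j2 j1D j2D | j jD] /=; last first.
  case: eqP => [-> | /eqP ji]; first by rewrite inE xA.
  exact: subsetP (setDS _ (subsetU1 x A)) _ (gNx j jD ji).
case: eqP => [-> | /eqP j1i]; case: eqP => [-> | /eqP j2i] //.
- by move/esym/eqP; rewrite (negbTE (gx j2 j2D j2i)).
- by move/eqP; rewrite (negbTE (gx j1 j1D j1i)).
- by apply: g_inj; apply/setD1P.
Qed.

Lemma distinct_representatives :
  (forall i, #|I| <= #|N i|) -> exists2 f : I -> T, injective f & forall i, f i \in N i.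
Proof.
move=> large; have [x0 _ | T0] := pickP (@predT T).
  have [|f f_inj fN] := @distinct_representatives_in x0 setT set0.
    by move=> i _; rewrite cardsT cards0 addn0.
  by exists f => [i j | i]; [apply: f_inj; rewrite inE | move: (fN i); rewrite !inE => /(_ isT)].
have I0 (i : I) : False.
  have Ni0 : #|N i| = 0 by apply: eq_card0 => x; have := T0 x.
  by have := large i; rewrite Ni0 leqn0 => /eqP /card0_eq /(_ i).
by exists (fun i => match I0 i with end) => i; case: (I0 i).
Qed.
End DistinctRepresentatives.

Section CommonNeighbourhood.
Variables (T : finType) (e : rel T).
Implicit Types (S : {set T}) (u : T).

Definition cnbr (S : {set T}) : {set T} := [set u | [forall x in S, e x u]].

Lemma cnbrP S u : reflect (forall x, x \in S -> e x u) (u \in cnbr S).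
Proof.
rewrite inE; apply: (iffP forallP) => [H x xS | H x]; last exact/implyP/H.
by have := H x; rewrite xS.
Qed.

Lemma cnbrS S S' : S \subset S' -> cnbr S' \subset cnbr S.
Proof.
by move=> /subsetP sSS'; apply/subsetP => u /cnbrP uS'; apply/cnbrP => x /sSS'/uS'.
Qed.

Lemma cnbrU S S' : cnbr (S :|: S') = cnbr S :&: cnbr S'.
Proof.
apply/setP => u; rewrite in_setI; apply/cnbrP/andP => [uSS' | [/cnbrP uS /cnbrP uS'] x].
  by split; apply/cnbrP => x xS; apply: uSS'; rewrite inE xS ?orbT.
by case/setUP; [apply: uS | apply: uS'].
Qed.

Hypothesis e_sym : symmetric e.
Hypothesis e_irr : irreflexive e.

Lemma cnbr_notin S u : u \in cnbr S -> u \notin S.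
Proof. by move=> /cnbrP uS; apply/negP => /uS; rewrite e_irr. Qed.

Lemma clique_subset (A B : {set T}) : is_clique e B -> A \subset B -> is_clique e A.
Proof. by move=> cB /subsetP AB x y /AB xB /AB yB; apply: cB. Qed.

Lemma clique_setU1 u S : is_clique e S -> u \in cnbr S -> is_clique e (u |: S).
Proof.
move=> cS /cnbrP uS x y /setU1P [-> | xS] /setU1P [-> | yS] //; first by rewrite eqxx.
- by rewrite e_sym => _; apply: uS.
- by move=> _; apply: uS.
- exact: cS.
Qed.

Variable delta : nat.
Hypothesis mindeg : forall v : T, delta <= #|[set u | e v u]|.

Lemma card_cnbr S : #|S| * delta - (#|S| - 1) * #|T| <= #|cnbr S|.
Proof.
have [-> | [x xS]] := set_0Vmem S; first by rewrite cards0.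
have dn : delta <= #|T| by apply: leq_trans (mindeg x) (max_card _).
have nonadj : ~: cnbr S \subset \bigcup_(y in S) ~: [set u | e y u].
  apply/subsetP => u; rewrite !inE negb_forall => /existsP [y].
  by rewrite negb_imply => /andP [yS nyu]; apply/bigcupP; exists y; rewrite ?inE.
have card_bigcup : #|\bigcup_(y in S) ~: [set u | e y u]| <= \sum_(y in S) (#|T| - delta).
  elim/big_ind2: _ => [|m A n B Am Bn | y yS]; first by rewrite cards0.
    by apply: leq_trans (leq_card_setU A B).1 (leq_add Am Bn).
  by rewrite cardsCs setCK leq_sub2l.
have := leq_trans (subset_leq_card nonadj) card_bigcup.
have S0 : 0 < #|S| by apply/card_gt0P; exists x.
have := cardsC (cnbr S); rewrite sum_nat_const; nia.
Qed.
End CommonNeighbourhood.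

Section Component.
Variables (T : finType) (e : rel T) (k : nat) (C : {set {set T}}).
Hypothesis e_sym : symmetric e.
Hypothesis e_irr : irreflexive e.
Hypothesis C_comp : is_Kcomponent e k C.
Hypothesis C_noK : ~ contains_copy e k C k.+2.
Implicit Types (P Q B : {set T}).

Lemma Kwalk_rcons A s B :
  Kwalk e k A s -> is_copy e k B -> Kstep e k (last A s) B -> Kwalk e k A (rcons s B).
Proof.
elim: s A => [|B' s IH] A /=; first by [].
by move=> [cB' [AB' w]] cB step; do 2!split => //; apply: IH.
Qed.

Lemma component_copy B : B \in C -> is_copy e k B.
Proof. by case: C_comp => A [_ HA] /HA [_ []]. Qed.

Lemma component_closed Q B :
  is_copy e k.+1 Q -> belongs_to k C Q -> B \subset Q -> #|B| = k -> B \in C.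
Proof.
case: C_comp => A [_ HA] cQ [B0 [/HA [cA [_ [s [w last_s]]]] B0Q]] BQ cardB.
have cB : is_copy e k B by split => //; apply: clique_subset BQ; case: cQ.
apply/HA; do 2!split => //; exists (rcons s B); rewrite last_rcons; split => //.
by apply: Kwalk_rcons => //; rewrite last_s; exists Q.
Qed.

Lemma cnbr_copy_eq0 Q : is_copy e k.+1 Q -> belongs_to k C Q -> cnbr e Q = set0.
Proof.
move=> [clQ cardQ] [B [BC BQ]]; apply/setP => u; rewrite in_set0; apply/negP => uQ.
apply: C_noK; exists (u |: Q); split.
  by split; [apply: clique_setU1 | rewrite cardsU1 (cnbr_notin e_irr uQ) cardQ].
by exists B; split => //; apply: subset_trans BQ (subsetU1 u Q).
Qed.

Section Families.
Variable I : finType.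
Hypothesis cnbr_large : forall B, B \in C -> #|I| <= #|cnbr e B|.
Implicit Types X Y : I -> {set T}.

Definition pairwise_disjoint X := forall i j, i != j -> [disjoint X i & X j].

Record component_family P X : Prop := ComponentFamily {
  component_family_disjoint : pairwise_disjoint X;
  component_family_cnbr : forall i, X i \subset cnbr e P;
  component_family_mem : forall i, P :|: X i \in C;
  component_family_sep : forall i j, [disjoint cnbr e (P :|: X i) & X j] }.

Record clique_family P X : Prop := CliqueFamily {
  clique_family_disjoint : pairwise_disjoint X;
  clique_family_cnbr : forall i, X i \subset cnbr e P;
  clique_family_copy : forall i, is_copy e k.+1 (P :|: X i);
  clique_family_belongs : forall i, belongs_to k C (P :|: X i) }.

Lemma component_family_self B : B \in C -> component_family B (fun=> set0).
Proof.
by move=> BC; split=> [i j _ | i | i | i j]; rewrite ?setU0 ?sub0set //;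
   rewrite -setI_eq0 ?setI0 ?set0I.
Qed.

Lemma clique_family_component v P Y :
  v \notin P -> clique_family (v |: P) Y -> component_family P Y.
Proof.
move=> vP [disj cnbrY copyY belY].
have cnbrPY i : Y i \subset cnbr e P := subset_trans (cnbrY i) (cnbrS e (subsetU1 v P)).
split=> // [i | i j].
  have vY : v \notin Y i.
    by apply/negP => /(subsetP (cnbrY i)) /(cnbr_notin e_irr); rewrite setU11.
  apply: (component_closed (copyY i) (belY i)); first by rewrite -setUA subsetU1.
  by have [_] := copyY i; rewrite -setUA cardsU1 in_setU negb_or vP vY => -[].
rewrite disjoints_subset; apply/subsetP => u uPY; rewrite inE; apply/negP => uY.
have : u \in cnbr e ((v |: P) :|: Y i).
  rewrite cnbrU in_setI (subsetP (cnbrY j) u uY).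
  by apply: subsetP uPY; apply: cnbrS; rewrite subsetUr.
by rewrite (cnbr_copy_eq0 (copyY i) (belY i)) in_set0.
Qed.

Lemma component_family_extend P X :
  component_family P X -> exists Y, clique_family P Y.
Proof.
move=> [disj cnbrX memX sep].
have [u u_inj uN] := distinct_representatives (fun i => cnbr_large (memX i)).
have uPX i : u i \notin P :|: X i := cnbr_notin e_irr (uN i).
have uX i j : u i \notin X j by rewrite (disjointFr (sep i j) (uN i)).
exists (fun i => u i |: X i); split=> [i j ij | i | i | i].
- rewrite disjoints_subset; apply/subsetP => x; rewrite !inE negb_or.
  case/predU1P => [-> | xX]; first by rewrite (inj_eq u_inj) ij uX.
  by rewrite (disjointFr (disj i j ij) xX) andbT; apply: contraNneq (uX j i) => <-.
- rewrite subUset sub1set cnbrX andbT; apply: subsetP (uN i).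
  by apply: cnbrS; rewrite subsetUl.
- have [clPX cardPX] := component_copy (memX i).
  rewrite setUCA; split; first exact: clique_setU1.
  by rewrite cardsU1 uPX cardPX.
- by exists (P :|: X i); split; rewrite // setUCA subsetU1.
Qed.

Lemma component_family_subset B P :
  B \in C -> P \subset B -> exists X, component_family P X.
Proof.
move=> BC; have [n] := ubnP #|B :\: P|; elim: n P => // n IH P ltn PB.
have [BP0 | [v /setDP [vB vP]]] := set_0Vmem (B :\: P).
  have -> : P = B by apply/eqP; rewrite eqEsubset PB /= -setD_eq0 BP0.
  by exists (fun=> set0); apply: component_family_self.
have [||X famX] := IH (v |: P); last 1 first.
- have [Y famY] := component_family_extend famX.
  by exists Y; apply: clique_family_component famY.
- have := cardsD1 v (B :\: P); rewrite inE vB vP /= setDDl setUC; lia.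
- by rewrite subUset sub1set vB PB.
Qed.

End Families.
End Component.

Theorem lemma4p2 (T : finType) (e : rel T) (k delta : nat)
  (e_sym : symmetric e) (e_irr : irreflexive e)
  (k_pos : 1 <= k)
  (mindeg : forall v : T, delta <= #|[set u | e v u]|)
  (hdelta : (k - 1) * #|T| <= k * delta)
  (C : {set {set T}})
  (hC : is_Kcomponent e k C)
  (noK : ~ contains_copy e k C k.+2) :
  exists F : {set {set T}},
    #|F| = k * delta - (k - 1) * #|T| /\
    (forall Q, Q \in F -> is_copy e k.+1 Q /\ belongs_to k C Q) /\
    (forall Q Q', Q \in F -> Q' \in F -> Q != Q' -> [disjoint Q & Q']).
Proof.
have [A [cA connA]] := hC.
have AC : A \in C by apply/connA; do 2!split => //; exists [::].
set s := k * delta - (k - 1) * #|T|.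
have large B : B \in C -> #|'I_s| <= #|cnbr e B|.
  by move=> /(component_copy hC) [_ cardB]; rewrite card_ord /s -cardB; apply: card_cnbr.
have [X famX] := component_family_subset e_sym e_irr hC noK large AC (sub0set A).
have [Y [disj _ copyY belY]] := component_family_extend e_sym e_irr hC large famX.
have Y_inj : injective Y.
  move=> i j Yij; apply/eqP/contraT => ij; have := disj i j ij.
  have [_] := copyY j; rewrite set0U Yij -setI_eq0 setIid => cardY.
  by move=> /eqP Y0; move: cardY; rewrite Y0 cards0.
exists [set Y i | i : 'I_s]; split; first by rewrite card_imset // card_ord.
split=> [Q /imsetP [i _ ->] | Q Q' /imsetP [i _ ->] /imsetP [j _ ->] YiYj].
  by have := copyY i; have := belY i; rewrite set0U.
by apply: disj; apply: contraNneq YiYj => ->.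
Qed.
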